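(* Let $p$ be a prime, let $f\ge1$, and let $q\ge1$ be a power of $p$. For $0\le i\le p^f-2$ and $0\le r\le q-1$ let $A_{i,r}=\{m\ge0: m\equiv i\pmod{p^f-1},\ m\equiv r\pmod q\}$. Let $s(n)_{n\ge0}$ be a sequence of $p$-adic integers with an approximate twisted interpolation $\{(s_{i,r},A_{i,r}):0\le i\le p^f-2,\ 0\le r\le q-1\}$. Then $$\lim_{\alpha\to\infty}\frac{|\{s(n)\bmod p^\alpha:n\ge0\}|}{p^\alpha}=\mu\Big(\mathbb{Z}_p\cap\bigcup_{i,r}s_{i,r}(r+q\mathbb{Z}_p)\Big).$$
   Context: Here each $s_{i,r}:\mathbb{Z}_p\to K$ is continuous, $K$ a finite extension of $\mathbb{Q}_p$ with the unique absolute value $|\cdot|_p$ extending the $p$-adic one, and ''approximate twisted interpolation'' means there are constants $C\ge0$, $0\le D<1$ with $|s(n)-s_{i,r}(n)|_p\le CD^n$ for all $n\in A_{i,r}$ and all $i,r$. $\mathbb{Z}_p$ is regarded as a subset of $K$. $\mu$ is the Haar measure on $\mathbb{Z}_p$ normalized by $\mu(m+p^\alpha\mathbb{Z}_p)=p^{-\alpha}$. *)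

From HB Require Import structures.
From mathcomp Require Import all_boot all_order all_algebra.
From mathcomp Require Import all_classical all_reals all_analysis.
Set Implicit Arguments. Unset Strict Implicit. Unset Printing Implicit Defensive.
Import Order.TTheory GRing.Theory Num.Theory.
Local Open Scope classical_set_scope.
Local Open Scope ring_scope.

Section PadicDefs.
Variables (R : realType) (p : nat) (K : fieldType) (absK : K -> R).

Definition padic_abs_int (z : int) : R :=
  if z == 0 then 0 else (p%:R) ^- (logn p `|z|%N).

(* Q_p regarded as a subset of K: the closure of Q in K *)
Definition Qp_in : set K :=
  [set x | forall e : R, 0 < e -> exists t : rat, absK (x - ratr t) < e].

(* Z_p regarded as a subset of K: the closure of Z in K *)
Definition Zp_in : set K :=
  [set x | forall a : nat, exists m : int, absK (x - m%:~R) <= (p%:R) ^- a].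

(* (K, absK) is a finite extension of Q_p equipped with the (unique)
   absolute value extending the p-adic one *)
Definition is_finite_ext_Qp : Prop :=
  [/\ (forall x, absK x = 0 <-> x = 0),
      (forall x y, absK (x * y) = absK x * absK y),
      (forall x y, absK (x + y) <= Num.max (absK x) (absK y)),
      (forall z : int, absK z%:~R = padic_abs_int z) &
      (
      (forall u : nat -> K,
          (forall e : R, 0 < e -> exists N, forall m n, (N <= m)%N -> (N <= n)%N ->
                absK (u m - u n) < e) ->
          exists l, forall e : R, 0 < e -> exists N, forall n, (N <= n)%N ->
                absK (u n - l) < e) /\
      exists d (b : 'I_d -> K),
        (forall x, exists c : 'I_d -> K, (forall i, Qp_in (c i)) /\
                     x = \sum_(i < d) c i * b i) /\
        (forall c : 'I_d -> K, (forall i, Qp_in (c i)) ->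
                     \sum_(i < d) c i * b i = 0 -> forall i, c i = 0))].

Definition cont_on_Zp (g : K -> K) : Prop :=
  forall x, Zp_in x -> forall e : R, 0 < e -> exists2 delta : R, 0 < delta &
    forall y, Zp_in y -> absK (x - y) < delta -> absK (g x - g y) < e.

Definition coset (m a : nat) : set K :=
  [set x | exists2 y, Zp_in y & x = m%:R + (p ^ a)%:R * y].

(* Haar measure on Z_p normalized by mu(m + p^a Z_p) = p^-a, realized as the
   associated (Caratheodory) outer measure: infimum over countable covers by
   cosets m + p^a Z_p of the sums of p^-a. *)
Definition cover_weight (c : option (nat * nat)) : \bar R :=
  match c with None => 0%E | Some (_, a) => (((p%:R) ^- a : R)%:E) end.
Definition cover_set (c : option (nat * nat)) : set K :=
  match c with None => set0 | Some (m, a) => coset m a end.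
Definition haar (E : set K) : \bar R :=
  ereal_inf [set (\sum_(0 <= j <oo) cover_weight (c j))%E |
               c in [set c : nat -> option (nat * nat) |
                     E `<=` \bigcup_j cover_set (c j)]].

Definition nres (s : nat -> K) (a : nat) : nat :=
  (\sum_(i < p ^ a) `[< exists n, coset i a (s n) >])%N.

Definition A_set (f q i r : nat) : set nat :=
  [set m | m %% (p ^ f - 1) = i /\ m %% q = r]%N.

End PadicDefs.

From HB Require Import structures.
From mathcomp Require Import all_boot all_order all_algebra.
From mathcomp Require Import all_classical all_reals all_analysis.
From mathcomp Require Import ring lra zify.
Import Order.TTheory GRing.Theory Num.Theory.
Set Implicit Arguments. Unset Strict Implicit. Unset Printing Implicit Defensive.
Local Open Scope classical_set_scope.
Local Open Scope ring_scope.

(* Write U for the intersection of Z_p with the union of the s_{i,r}(r + qZ_p).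
   Every point s_{i,r}(r + q y) of U is a p-adic limit of values s(n) with n in A_{i,r}:
   since p^f - 1 is prime to p, the Chinese remainder theorem gives arbitrarily
   large n = i mod p^f - 1 that are p-adically close to r + q y, and continuity
   of s_{i,r} together with |s(n) - s_{i,r}(n)| <= C D^n does the rest.  So the
   residues mod p^a hit by s cover U, and mu(U) is at most the ratio at every
   level a.  Conversely U is compact, being a finite union of continuous images
   of the balls r + qZ_p (compact by nested bisection and completeness of K),
   so any cover of U by cosets has a finite subcover.  As s(n) is exponentially
   close to s_{i,r}(n), which lies in U, all but finitely many s(n) lie in that
   finite subcover, and at fine levels the ratio exceeds the weight of the
   cover by at most (number of exceptions) / p^a. *)

Section FiniteCovers.
Variable T : Type.

Definition finitely_covered (O : nat -> set T) (A : set T) :=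
  exists N, A `<=` \bigcup_(j in `I_N) O j.

Lemma finitely_coveredS O A B :
  A `<=` B -> finitely_covered O B -> finitely_covered O A.
Proof. by move=> AB [N BO]; exists N; apply: subset_trans BO. Qed.

Lemma finitely_covered_bigcup (I : finType) (A : I -> set T) O :
  (forall i, finitely_covered O (A i)) -> finitely_covered O (\bigcup_i A i).
Proof.
move=> /choice[N AN]; exists (\max_i N i)%N => x [i _ /AN[j jN Oj]].
by exists j => //; apply: leq_trans jN (leq_bigmax i).
Qed.

End FiniteCovers.

Lemma sum_nat_bool_le1 (I : finType) (b : pred I) :
  (forall i j, b i -> b j -> i = j) -> (\sum_i b i <= 1)%N.
Proof.
move=> b_uniq; rewrite (eq_bigr (fun i => if b i then 1 else 0))%N; last first.
  by move=> i; case: (b i).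
rewrite -big_mkcond sum1dep_card; apply/card_le1_eqP => i j.
by rewrite !inE => bi bj; apply: b_uniq.
Qed.

Lemma count_modn_eq d k v : (0 < d)%N ->
  (\sum_(i < d * k) (i %% d == v %% d) = k)%N.
Proof.
move=> d_gt0; elim: k => [|k IHk]; first by rewrite muln0 big_ord0.
rewrite mulnSr big_split_ord /= IHk -[RHS]addn1; congr (_ + _)%N.
under eq_bigr do rewrite mulnC modnMDl modn_small //.
rewrite (bigD1 (Ordinal (ltn_pmod v d_gt0))) //= eqxx big1 // => i.
by rewrite -val_eqE /= => /negbTE ->.
Qed.

Lemma geometric_eventually_le (R : realType) (C D e : R) :
  0 <= C -> 0 <= D -> D < 1 -> 0 < e ->
  exists n1, forall n, (n1 <= n)%N -> C * D ^+ n <= e.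
Proof.
move=> C_ge0 D_ge0 D_lt1 e_gt0.
have D_norm : `|D| < 1 by rewrite ger0_norm.
have /cvgrPdist_le/(_ e e_gt0)[N _ CDe] := cvg_geometric C D_norm.
exists N => n /CDe /=.
by rewrite sub0r normrN ger0_norm ?mulr_ge0 ?exprn_ge0.
Qed.

Section PadicIntegers.
Variables (R : realType) (p : nat) (K : fieldType) (absK : K -> R).
Hypotheses (p_prime : prime p) (absK_Qp : is_finite_ext_Qp p absK).
Local Notation pR := (p%:R : R).
Local Notation Zp := (Zp_in p absK).

Lemma pR_gt1 : 1 < pR.
Proof. by rewrite ltr1n prime_gt1. Qed.

Lemma pR_gt0 : 0 < pR.
Proof. exact: lt_trans ltr01 pR_gt1. Qed.

Lemma expn_prime_gt0 a : (0 < p ^ a)%N.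
Proof. by rewrite expn_gt0 prime_gt0. Qed.

Lemma invpRX_gt0 a : 0 < pR ^- a.
Proof. by rewrite invr_gt0 exprn_gt0 ?pR_gt0. Qed.

Lemma ler_invpRX a b : (pR ^- a <= pR ^- b) = (b <= a)%N.
Proof. by rewrite lef_pV2 ?posrE ?exprn_gt0 ?pR_gt0 // (ler_eXn2l pR_gt1). Qed.

Lemma invpRX_eventually_lt e : 0 < e -> exists N, forall b, (N <= b)%N -> pR ^- b < e.
Proof.
move=> e_gt0; have e_inv_ge0 : 0 <= e^-1 by rewrite invr_ge0 ltW.
have := archi_boundP e_inv_ge0.
set N := Num.Def.archi_bound _ => eN; exists N => b Nb.
rewrite -[e]invrK ltf_pV2 ?posrE ?invr_gt0 ?exprn_gt0 ?pR_gt0 //.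
apply: lt_le_trans eN _; rewrite -natrX ler_nat.
by apply/(leq_trans Nb)/ltnW/ltn_expl/prime_gt1.
Qed.

Lemma coprime_expn_subn1 f : (0 < f)%N -> coprime (p ^ f - 1) p.
Proof.
move=> f_gt0; rewrite coprime_sym prime_coprime //; apply/negP => p_dvd.
have : (p %| p ^ f - (p ^ f - 1))%N by rewrite dvdn_sub // dvdn_exp.
by rewrite subKn ?expn_prime_gt0 // dvdn1 => /eqP p1; move: (prime_gt1 p_prime); rewrite p1.
Qed.

Lemma absK_eq0 x : absK x = 0 <-> x = 0.
Proof. by case: absK_Qp. Qed.

Lemma absKM x y : absK (x * y) = absK x * absK y.
Proof. by case: absK_Qp => _ + _ _ _. Qed.

Lemma absK_ultra x y : absK (x + y) <= Num.max (absK x) (absK y).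
Proof. by case: absK_Qp => _ _ + _ _. Qed.

Lemma absK_int (z : int) : absK z%:~R = padic_abs_int R p z.
Proof. by case: absK_Qp => _ _ _ + _. Qed.

Lemma absK0 : absK 0 = 0.
Proof. exact/absK_eq0. Qed.

Lemma absK1 : absK 1 = 1.
Proof. by have := absK_int 1; rewrite /padic_abs_int /= logn1 expr0 invr1. Qed.

Lemma absKN x : absK (- x) = absK x.
Proof.
have absKN1 : absK (-1) = 1.
  by have := absK_int (-1); rewrite /padic_abs_int /= logn1 expr0 invr1.
by rewrite -mulN1r absKM absKN1 mul1r.
Qed.

Lemma absK_ge0 x : 0 <= absK x.
Proof. by have := absK_ultra x (- x); rewrite subrr absK0 absKN maxxx. Qed.

Lemma absK_distC x y : absK (x - y) = absK (y - x).
Proof. by rewrite -absKN opprB. Qed.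

Lemma absKD_le x y e : absK x <= e -> absK y <= e -> absK (x + y) <= e.
Proof. by move=> xe ye; apply: le_trans (absK_ultra x y) _; rewrite ge_max xe ye. Qed.

Lemma absK_le_trans x y z e :
  absK (x - y) <= e -> absK (y - z) <= e -> absK (x - z) <= e.
Proof. by move=> xy yz; have := absKD_le xy yz; rewrite addrA subrK. Qed.

Lemma absKV x : x != 0 -> absK x^-1 = (absK x)^-1.
Proof.
move=> x_neq0; have absKx : absK x != 0 by apply: contra_neq x_neq0 => /absK_eq0.
by apply: (mulfI absKx); rewrite -absKM !divff // absK1.
Qed.

Lemma absK_int_le_dvd (z : int) a : (absK z%:~R <= pR ^- a) = (p ^ a %| `|z|)%N.
Proof.
rewrite absK_int /padic_abs_int; case: eqP => [->|/eqP z_neq0].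
  by rewrite dvdn0 ltW ?invpRX_gt0.
by rewrite ler_invpRX pfactor_dvdn // absz_gt0.
Qed.

Lemma absK_int_le1 (z : int) : absK z%:~R <= 1.
Proof. by have := absK_int_le_dvd z 0; rewrite expr0 invr1 dvd1n. Qed.

Lemma absK_nat_le1 n : absK n%:R <= 1.
Proof. exact: (absK_int_le1 n). Qed.

Lemma absK_expn a : absK (p ^ a)%:R = pR ^- a.
Proof.
rewrite -[LHS]/(absK ((p ^ a)%N%:Z)%:~R) absK_int /padic_abs_int pfactorK //.
by rewrite ifF // eqz_nat eqn0Ngt expn_prime_gt0.
Qed.

Lemma expn_prime_neq0 a : (p ^ a)%:R != 0 :> K.
Proof.
apply/eqP => /(congr1 absK); rewrite absK_expn absK0 => /eqP.
by rewrite gt_eqF ?invpRX_gt0.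
Qed.

Lemma Zp_int (z : int) : Zp z%:~R.
Proof. by move=> a; exists z; rewrite subrr absK0 ltW ?invpRX_gt0. Qed.

Lemma Zp_nat n : Zp n%:R.
Proof. exact: (Zp_int n). Qed.

Lemma Zp_le1 x : Zp x -> absK x <= 1.
Proof.
move=> /(_ 0%N)[m]; rewrite expr0 invr1 => xm.
by rewrite -(subrK m%:~R x) absKD_le // absK_int_le1.
Qed.

Lemma ZpD x y : Zp x -> Zp y -> Zp (x + y).
Proof.
move=> Zx Zy a; have [m xm] := Zx a; have [n yn] := Zy a.
exists (m + n); rewrite intrD opprD addrACA.
exact: absKD_le.
Qed.

Lemma ZpB x y : Zp x -> Zp y -> Zp (x - y).
Proof.
move=> Zx Zy; apply: ZpD => // a; have [m ym] := Zy a.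
by exists (- m); rewrite intrN -opprD absKN.
Qed.

Lemma ZpM x y : Zp x -> Zp y -> Zp (x * y).
Proof.
move=> Zx Zy a; have [m xm] := Zx a; have [n yn] := Zy a.
exists (m * n); rewrite intrM.
have -> : x * y - m%:~R * n%:~R = x * (y - n%:~R) + n%:~R * (x - m%:~R) by ring.
apply: absKD_le; rewrite absKM -[_ ^- a]mul1r ler_pM ?absK_ge0 //.
  exact: Zp_le1.
exact: absK_int_le1.
Qed.

Lemma Zp_affine m a y : Zp y -> Zp (m%:R + (p ^ a)%:R * y).
Proof. by move=> Zy; apply/ZpD/ZpM => //; apply: Zp_nat. Qed.

Lemma Zp_divexpn x a : Zp x -> absK x <= pR ^- a -> Zp (x / (p ^ a)%:R).
Proof.
move=> Zx xa b; have [m xm] := Zx (a + b)%N.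
have /dvdzP[n mn] : ((p ^ a)%N%:Z %| m)%Z.
  rewrite dvdzE absz_nat -absK_int_le_dvd -[m%:~R](subKr x) absKD_le // absKN.
  by apply: le_trans xm _; rewrite ler_invpRX leq_addr.
exists n; have -> : x / (p ^ a)%:R - n%:~R = (x - m%:~R) / (p ^ a)%:R.
  by rewrite mn intrM; field; apply: expn_prime_neq0.
rewrite absKM absKV ?expn_prime_neq0 // absK_expn invrK.
rewrite -(ler_pM2r (invpRX_gt0 a)) -mulrA divff ?mulr1 ?gt_eqF ?exprn_gt0 ?pR_gt0 //.
by apply: le_trans xm _; rewrite -invfM -exprD addnC.
Qed.

Definition padic_ball (c : K) (a : nat) : set K :=
  [set x | Zp x /\ absK (x - c) <= pR ^- a].

Lemma coset_padic_ball m a : coset p absK m a = padic_ball m%:R a.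
Proof.
apply/seteqP; split=> x.
  case=> y Zy ->; split; first exact: Zp_affine.
  rewrite addrAC subrr add0r absKM absK_expn.
  by apply: ler_piMr; [exact/ltW/invpRX_gt0 | exact: Zp_le1].
case=> Zx xm; exists ((x - m%:R) / (p ^ a)%:R).
  exact/Zp_divexpn/xm/ZpB/Zp_nat.
by rewrite mulrC divfK ?expn_prime_neq0 // addrC subrK.
Qed.

Lemma Zp_residue x a : Zp x -> exists2 i : nat, (i < p ^ a)%N & padic_ball i%:R a x.
Proof.
move=> Zx; have [m xm] := Zx a; set d : int := (p ^ a)%N%:Z.
have d_neq0 : d != 0 by rewrite eqz_nat -lt0n expn_prime_gt0.
have m_mod_ge0 := modz_ge0 m d_neq0.
exists `|(m %% d)%Z|%N.
  by rewrite -ltz_nat gez0_abs // ltz_pmod // ltz_nat expn_prime_gt0.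
split=> //; rewrite -[_%:R]/((`|(m %% d)%Z|%N)%:Z%:~R) gez0_abs //.
apply: absK_le_trans xm _.
by rewrite -intrB absK_int_le_dvd {1}(divz_eq m d) addrK abszM dvdn_mull.
Qed.

Lemma absK_natB_modn n a : absK (n%:R - (n %% p ^ a)%:R) <= pR ^- a.
Proof.
rewrite {1}(divn_eq n (p ^ a)) natrD addrK natrM absKM absK_expn.
by apply: ler_piMl; [exact/ltW/invpRX_gt0 | exact: absK_nat_le1].
Qed.

Lemma padic_ball_residue_uniq (i j a : nat) x : (i < p ^ a)%N -> (j < p ^ a)%N ->
  padic_ball i%:R a x -> padic_ball j%:R a x -> i = j.
Proof.
move=> ilt jlt [_ xi] [_ xj].
have : absK ((i%:Z - j%:Z)%:~R : K) <= pR ^- a.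
  by rewrite intrB; apply: absK_le_trans xj; rewrite absK_distC.
rewrite absK_int_le_dvd => /dvdn_leq; lia.
Qed.

Lemma padic_ball_modn_eq (i m a b : nat) x : (a <= b)%N ->
  padic_ball i%:R b x -> padic_ball m%:R a x -> (i %% p ^ a = m %% p ^ a)%N.
Proof.
move=> ab [Zx xi] [_ xm].
have mod_ball n : absK (x - n%:R) <= pR ^- a -> padic_ball (n %% p ^ a)%:R a x.
  by move=> xn; split=> //; apply: absK_le_trans xn (absK_natB_modn n a).
apply: (padic_ball_residue_uniq (a := a) (x := x)); rewrite ?ltn_pmod ?expn_prime_gt0 //.
  by apply: mod_ball; apply: le_trans xi _; rewrite ler_invpRX.
exact: mod_ball.
Qed.

Lemma nat_residue_of_close n r b y : (r < p ^ b)%N -> Zp y ->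
  absK (n%:R - (r%:R + (p ^ b)%:R * y)) <= pR ^- b -> (n %% p ^ b = r)%N.
Proof.
move=> rlt Zy nz; have : padic_ball r%:R b (r%:R + (p ^ b)%:R * y).
  by rewrite -coset_padic_ball; exists y.
case=> Zz zr; rewrite -(modn_small rlt).
apply: (padic_ball_modn_eq (b := b) (x := n%:R)) => //; split; try exact: Zp_nat.
  by rewrite subrr absK0 ltW ?invpRX_gt0.
exact: absK_le_trans zr.
Qed.

Lemma nat_approx_crt N z b i n1 : coprime N p -> (i < N)%N -> Zp z ->
  exists n, [/\ (n1 <= n)%N, (n %% N = i)%N & absK (n%:R - z) <= pR ^- b].
Proof.
move=> Np iN Zz; have [j jlt zj] := Zp_residue b Zz.
have NQ : coprime N (p ^ b) by rewrite coprimeXr.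
set n := (chinese N (p ^ b) i j + N * p ^ b * n1)%N.
have NQ_gt0 : (0 < N * p ^ b)%N by rewrite muln_gt0 expn_prime_gt0 andbT; lia.
exists n; split.
- by apply: leq_trans (leq_addl _ _); apply: leq_pmull.
- by rewrite /n -mulnA addnC mulnC modnMDl chinese_modl // modn_small.
have n_mod : (n %% p ^ b = j)%N.
  by rewrite /n mulnAC addnC modnMDl chinese_modr // modn_small.
apply: absK_le_trans (absK_natB_modn n b) _.
by rewrite n_mod absK_distC; case: zj.
Qed.

Lemma Zp_nested_limit (c : nat -> K) a : (forall t, Zp (c t)) ->
  (forall t, absK (c t.+1 - c t) <= pR ^- (t + a)) ->
  exists2 L, Zp L & forall t, absK (L - c t) <= pR ^- (t + a).
Proof.
move=> Zc c_step.
have c_cauchy t u : (t <= u)%N -> absK (c u - c t) <= pR ^- (t + a).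
  elim: u => [|u IHu].
    by rewrite leqn0 => /eqP ->; rewrite subrr absK0 ltW ?invpRX_gt0.
  rewrite leq_eqVlt => /orP[/eqP <-|]; first by rewrite subrr absK0 ltW ?invpRX_gt0.
  rewrite ltnS => tu; apply: absK_le_trans (IHu tu).
  by apply: le_trans (c_step u) _; rewrite ler_invpRX leq_add2r.
have [L cL] : exists L, forall e : R, 0 < e ->
    exists N, forall n, (N <= n)%N -> absK (c n - L) < e.
  case: absK_Qp => _ _ _ _ [complete _]; apply: complete => e e_gt0.
  have [N Ne] := invpRX_eventually_lt e_gt0; exists N => m n Nm Nn.
  wlog mn : m n Nm Nn / (m <= n)%N.
    move=> hw; case: (leqP m n) => [|/ltnW] ?; first exact: hw.
    by rewrite absK_distC; apply: hw.
  rewrite absK_distC; apply: le_lt_trans (c_cauchy _ _ mn) (Ne _ _).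
  exact: leq_trans Nm (leq_addr _ _).
have Lc t : absK (L - c t) <= pR ^- (t + a).
  have [N cN] := cL _ (invpRX_gt0 (t + a)).
  apply: (@absK_le_trans _ (c (maxn N t))); last exact/c_cauchy/leq_maxr.
  by rewrite absK_distC; apply/ltW/cN/leq_maxl.
exists L => // b; have [m cm] := Zc b b; exists m.
by apply: absK_le_trans cm; apply: le_trans (Lc b) _; rewrite ler_invpRX leq_addr.
Qed.

Lemma uncovered_subball O m a :
  ~ finitely_covered O (padic_ball m%:R a) ->
  exists i : nat, absK (i%:R - m%:R) <= pR ^- a /\
    ~ finitely_covered O (padic_ball i%:R a.+1).
Proof.
move=> uncov; apply: contrapT => /forallNP sub_cov; apply: uncov.
pose A (t : 'I_(p ^ a.+1)) :=
  [set x | absK (t%:R - m%:R) <= pR ^- a /\ padic_ball t%:R a.+1 x].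
apply: (finitely_coveredS _ (finitely_covered_bigcup (A := A) _)).
  move=> x [Zx xm]; have [t tlt [_ xt]] := Zp_residue a.+1 Zx.
  exists (Ordinal tlt) => //; split=> //=.
  by apply: absK_le_trans xm; rewrite absK_distC; apply: le_trans xt _; rewrite ler_invpRX.
move=> t; case: (pselect (absK (t%:R - m%:R) <= pR ^- a)) => [tm|ntm].
  apply: (finitely_coveredS (B := padic_ball t%:R a.+1)); first by move=> x [].
  by apply: contrapT => uncov_t; apply: (sub_cov t).
by exists 0%N => x [/ntm].
Qed.

Lemma padic_ball_compact (O : nat -> set K) m a :
  padic_ball m%:R a `<=` \bigcup_j O j ->
  (forall j x, padic_ball m%:R a x -> O j x ->
     exists b, padic_ball x b `&` padic_ball m%:R a `<=` O j) ->
  finitely_covered O (padic_ball m%:R a).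
Proof.
move=> cover open; apply: contrapT => uncov0.
(* Uncovered sub-balls nest down to a point L; the O j containing L then
   contains one of them. *)
pose uncov (mb : nat * nat) := ~ finitely_covered O (padic_ball mb.1%:R mb.2).
have /choice[g gP] : forall mb, exists i : nat, uncov mb ->
    absK (i%:R - mb.1%:R) <= pR ^- mb.2 /\ uncov (i, mb.2.+1).
  move=> mb; case: (pselect (uncov mb)) => [/uncovered_subball[i iP]|nuncov].
    by exists i.
  by exists 0%N.
pose cen := fix cen t := if t is t'.+1 then g (cen t', t' + a)%N else m.
have cen_uncov t : uncov (cen t, t + a)%N.
  by elim: t => // t IHt; exact: (gP _ IHt).2.
have [L ZL Lcen] : exists2 L, Zp L & forall t, absK (L - (cen t)%:R) <= pR ^- (t + a).
  by apply: Zp_nested_limit => t; [exact: Zp_nat | exact: (gP _ (cen_uncov t)).1].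
have Lball : padic_ball m%:R a L by split; last exact: Lcen 0%N.
have [j _ OjL] := cover L Lball.
have [b Ob] := open j L Lball OjL.
have ba_le : pR ^- (b + a) <= pR ^- b by rewrite ler_invpRX leq_addr.
have ba_le' : pR ^- (b + a) <= pR ^- a by rewrite ler_invpRX leq_addl.
apply: (cen_uncov b); exists j.+1 => x [Zx xcen]; exists j => //=.
apply: Ob; split; split=> //.
  apply: absK_le_trans (le_trans xcen ba_le) _.
  by rewrite absK_distC; apply: le_trans (Lcen b) ba_le.
apply: absK_le_trans (le_trans xcen ba_le') _.
apply: (@absK_le_trans _ L); last exact: Lcen 0%N.
by rewrite absK_distC; apply: le_trans (Lcen b) ba_le'.
Qed.

Definition cover_level (c : option (nat * nat)) : nat :=
  if c is Some (_, a) then a else 0%N.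

Definition cover_radius (c : option (nat * nat)) : R :=
  if c is Some (_, a) then pR ^- a else 0.

Lemma cover_weightE c : cover_weight R p c = (cover_radius c)%:E.
Proof. by case: c => [[]|]. Qed.

Lemma cover_radius_ge0 c : 0 <= cover_radius c.
Proof. by case: c => [[? ?]|] //=; rewrite ltW ?invpRX_gt0. Qed.

Lemma nres_le_cover (u : nat -> K) (c : nat -> option (nat * nat)) Nf n0 al :
  (forall n, (n0 <= n)%N -> exists2 j, (j < Nf)%N & cover_set p absK (c j) (u n)) ->
  (forall j, (j < Nf)%N -> (cover_level (c j) <= al)%N) ->
  (nres p absK u al <=
     n0 + \sum_(j < Nf) if c j is Some (_, a) then p ^ (al - a) else 0)%N.
Proof.
move=> u_cov c_le.
(* A residue mod p^al is hit either by one of the first n0 terms, each of which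
   hits only one residue, or inside some cover ball of level a <= al, which
   contains p^(al - a) residues. *)
pose early i := (\sum_(n < n0) `[< padic_ball i%:R al (u n) >])%N.
pose late j i := if c j is Some (m, a) then (i %% p ^ a == m %% p ^ a)%N else false.
have hit_le (i : 'I_(p ^ al)) :
    (`[< exists n, coset p absK i al (u n) >] <= early i + \sum_(j < Nf) late j i)%N.
  case: asboolP => //= -[n]; rewrite coset_padic_ball => uni.
  case: (ltnP n n0) => [nn0|n0n].
    by apply: leq_trans (leq_addr _ _); rewrite /early (bigD1 (Ordinal nn0)) //= asboolT.
  have [j jNf] := u_cov n n0n; case cj: (c j) => [[m a]|] //=.
  rewrite coset_padic_ball => unm; have := c_le j jNf; rewrite cj /= => aal.
  apply: leq_trans (leq_addl _ _); rewrite (bigD1 (Ordinal jNf)) //= /late cj.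
  by rewrite (padic_ball_modn_eq aal uni unm) eqxx.
apply: (@leq_trans (\sum_(i < p ^ al) (early i + \sum_(j < Nf) late j i))).
  by apply: leq_sum => i _; apply: hit_le.
rewrite big_split /=; apply: leq_add.
  rewrite /early exchange_big /= -[n0 in leqRHS]muln1.
  rewrite -[n0 in leqRHS]card_ord -sum_nat_const.
  apply: leq_sum => n _; apply: sum_nat_bool_le1 => i j /asboolP ui /asboolP uj.
  exact/val_inj/(padic_ball_residue_uniq _ _ ui uj).
rewrite exchange_big /=; apply: leq_sum => j _; rewrite /late.
case cj: (c j) => [[m a]|]; last by rewrite big1.
have := c_le j (ltn_ord j); rewrite cj /= => aal.
have -> : (p ^ al = p ^ a * p ^ (al - a))%N by rewrite -expnD subnKC.
by rewrite count_modn_eq ?expn_prime_gt0.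
Qed.

Lemma nres_ratio_le_cover (u : nat -> K) (c : nat -> option (nat * nat)) Nf n0 al :
  (forall n, (n0 <= n)%N -> exists2 j, (j < Nf)%N & cover_set p absK (c j) (u n)) ->
  (forall j, (j < Nf)%N -> (cover_level (c j) <= al)%N) ->
  (nres p absK u al)%:R / (p ^ al)%:R <=
    n0%:R / (p ^ al)%:R + \sum_(j < Nf) cover_radius (c j).
Proof.
move=> u_cov c_le; have := nres_le_cover u_cov c_le.
rewrite -(ler_nat R) -(@ler_pM2r _ (p ^ al)%:R^-1) ?invr_gt0 ?ltr0n ?expn_prime_gt0 //.
move/le_trans; apply; rewrite natrD natr_sum mulrDl mulr_suml lerD2l.
apply: ler_sum => j _; have := c_le j (ltn_ord j).
case: (c j) => [[m a]|] /= aal; last by rewrite mul0r.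
rewrite !natrX exprB ?unitfE ?gt_eqF ?pR_gt0 // mulrAC divff ?mul1r //.
by rewrite gt_eqF // exprn_gt0 // pR_gt0.
Qed.

Section TwistedInterpolation.
Variables (f k : nat) (s : nat -> K) (sir : nat -> nat -> K -> K) (C D : R).
Local Notation M := (p ^ f - 1)%N.
Local Notation q := (p ^ k)%N.
Hypothesis f_gt0 : (0 < f)%N.
Hypothesis s_Zp : forall n, Zp (s n).
Hypothesis sir_cont :
  forall i r, (i < M)%N -> (r < q)%N -> cont_on_Zp p absK (sir i r).
Hypotheses (C_ge0 : 0 <= C) (D_ge0 : 0 <= D) (D_lt1 : D < 1).
Hypothesis s_sir : forall i r n, (i < M)%N -> (r < q)%N -> A_set p f q i r n ->
  absK (s n - sir i r n%:R) <= C * D ^+ n.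

Definition interpolation_image : set K :=
  [set x | Zp x /\ exists i r, [/\ (i < M)%N, (r < q)%N &
     exists2 y, Zp y & x = sir i r (r%:R + q%:R * y)]].

Lemma s_approximates_sir i r y a : (i < M)%N -> (r < q)%N -> Zp y ->
  exists2 n, A_set p f q i r n & absK (s n - sir i r (r%:R + q%:R * y)) <= pR ^- a.
Proof.
move=> iM rq Zy; set z := r%:R + q%:R * y.
have Zz : Zp z by exact: Zp_affine.
have [del del_gt0 sir_z] := sir_cont iM rq Zz (invpRX_gt0 a).
have [b0 b0_del] := invpRX_eventually_lt del_gt0.
have [n1 CD_le] := geometric_eventually_le C_ge0 D_ge0 D_lt1 (invpRX_gt0 a).
have [n [n1n nM nz]] := nat_approx_crt (maxn b0 k) n1 (coprime_expn_subn1 f_gt0) iM Zz.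
have nq : (n %% q = r)%N.
  by apply: nat_residue_of_close rq Zy _; apply: le_trans nz _; rewrite ler_invpRX leq_maxr.
exists n; first by split.
apply: (@absK_le_trans _ (sir i r n%:R)).
  by apply: le_trans (s_sir iM rq _) (CD_le _ n1n).
rewrite absK_distC; apply/ltW/sir_z; first exact: Zp_nat.
by rewrite absK_distC; apply: le_lt_trans nz (b0_del _ (leq_maxl _ _)).
Qed.

Lemma sir_Zp i r y : (i < M)%N -> (r < q)%N -> Zp y -> Zp (sir i r (r%:R + q%:R * y)).
Proof.
move=> iM rq Zy a; have [n _ sn] := s_approximates_sir a iM rq Zy.
have [m snm] := s_Zp n a; exists m.
by apply: absK_le_trans snm; rewrite absK_distC.
Qed.

Lemma sir_ball_image i r : (i < M)%N -> (r < q)%N ->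
  sir i r @` padic_ball r%:R k `<=` interpolation_image.
Proof.
move=> iM rq x [z]; rewrite -coset_padic_ball => -[y Zy ->] <-.
by split; [exact: sir_Zp | exists i, r; split => //; exists y].
Qed.

Lemma haar_image_le_nres a :
  (haar p absK interpolation_image <= ((nres p absK s a)%:R / (p ^ a)%:R)%:E)%E.
Proof.
pose hit i := `[< exists n, coset p absK i a (s n) >].
pose c j := if (j < p ^ a)%N && hit j then Some (j, a) else None.
apply: ereal_inf_lbound; exists c.
  move=> x [Zx [i [r [iM rq [y Zy ex]]]]].
  have [i0 i0lt [_ xi0]] := Zp_residue a Zx.
  have [n _ sn] := s_approximates_sir a iM rq Zy.
  have hit_i0 : hit i0.
    apply/asboolP; exists n; rewrite coset_padic_ball; split; first exact: s_Zp.
    by apply: absK_le_trans xi0; rewrite ex.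
  by exists i0 => //; rewrite /c i0lt hit_i0 /= coset_padic_ball.
rewrite (nneseries_split 0 (p ^ a)); last first.
  by move=> j _; rewrite cover_weightE lee_fin cover_radius_ge0.
rewrite eseries0 ?adde0; last by move=> j; rewrite add0n /c leqNgt => /negbTE ->.
rewrite add0n; under eq_bigr do rewrite cover_weightE.
rewrite sumEFin big_mkord /nres natr_sum mulr_suml; congr (_%:E); apply: eq_bigr => j _.
by rewrite /c ltn_ord /hit /=; case: asboolP => _; rewrite /= ?mul1r ?mul0r // natrX.
Qed.

Lemma sir_preimage_open i r (cj : option (nat * nat)) z : (i < M)%N -> (r < q)%N ->
  padic_ball r%:R k z -> cover_set p absK cj (sir i r z) ->
  exists b, padic_ball z b `&` padic_ball r%:R k `<=` sir i r @^-1` cover_set p absK cj.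
Proof.
move=> iM rq [Zz zr]; case: cj => [[m a]|] //=; rewrite !coset_padic_ball => -[_ sir_m].
have [del del_gt0 sir_z] := sir_cont iM rq Zz (invpRX_gt0 a).
have [b b_del] := invpRX_eventually_lt del_gt0.
exists b => y [[Zy yz] yr]; split.
  by have [] := sir_ball_image iM rq (ex_intro2 _ _ y yr erefl).
apply: absK_le_trans sir_m; rewrite absK_distC; apply/ltW/sir_z => //.
by rewrite absK_distC; apply: le_lt_trans yz (b_del _ (leqnn b)).
Qed.

Lemma interpolation_image_finitely_covered (c : nat -> option (nat * nat)) :
  interpolation_image `<=` \bigcup_j cover_set p absK (c j) ->
  finitely_covered (fun j => cover_set p absK (c j)) interpolation_image.
Proof.
move=> U_cov.
pose A (ir : 'I_M * 'I_q) := sir ir.1 ir.2 @` padic_ball (ir.2)%:R k.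
apply: (finitely_coveredS _ (finitely_covered_bigcup (A := A) _)).
  move=> x [_ [i [r [iM rq [y Zy ->]]]]]; exists (Ordinal iM, Ordinal rq) => //.
  by exists (r%:R + q%:R * y) => //; rewrite -coset_padic_ball; exists y.
move=> [[i iM] [r rq]]; rewrite /A /=.
have [N cov] : finitely_covered (fun j => sir i r @^-1` cover_set p absK (c j))
                                (padic_ball r%:R k).
  apply: padic_ball_compact => [z zr|j z zr]; last exact: sir_preimage_open.
  have [j _ cj] := U_cov _ (sir_ball_image iM rq (ex_intro2 _ _ z zr erefl)).
  by exists j.
by exists N => _ [z zr <-]; apply: cov.
Qed.

Lemma s_eventually_in_cover (c : nat -> option (nat * nat)) Nf :
  interpolation_image `<=` \bigcup_(j in `I_Nf) cover_set p absK (c j) ->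
  exists n0, forall n, (n0 <= n)%N ->
    exists2 j, (j < Nf)%N & cover_set p absK (c j) (s n).
Proof.
move=> U_cov; set amax := (\max_(j < Nf) cover_level (c j))%N.
have [n0 CD_le] := geometric_eventually_le C_ge0 D_ge0 D_lt1 (invpRX_gt0 amax).
exists n0 => n n0n.
have nM : (n %% M < M)%N by rewrite ltn_pmod // subn_gt0 -{1}(expn0 p) ltn_exp2l ?prime_gt1.
have nq : (n %% q < q)%N by rewrite ltn_pmod ?expn_prime_gt0.
have sir_n : interpolation_image (sir (n %% M) (n %% q) n%:R).
  apply: (sir_ball_image nM nq); exists n%:R => //; split; first exact: Zp_nat.
  exact: absK_natB_modn.
have [j jNf] := U_cov _ sir_n; case cj: (c j) => [[m a]|] //=.
rewrite coset_padic_ball => -[_ sir_m]; exists j; rewrite // cj /= coset_padic_ball.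
split; first exact: s_Zp.
apply: absK_le_trans sir_m; apply: le_trans (s_sir nM nq _) _; first by split.
apply: le_trans (CD_le _ n0n) _; rewrite ler_invpRX.
by have := @leq_bigmax _ (fun j : 'I_Nf => cover_level (c j)) (Ordinal jNf); rewrite /= cj.
Qed.

Lemma nres_ratio_eventually_le (c : nat -> option (nat * nat)) e :
  interpolation_image `<=` \bigcup_j cover_set p absK (c j) -> 0 < e ->
  exists N, forall al, (N <= al)%N ->
    (((nres p absK s al)%:R / (p ^ al)%:R)%:E <=
       \sum_(0 <= j <oo) cover_weight R p (c j) + e%:E)%E.
Proof.
move=> U_cov e_gt0.
have [Nf /s_eventually_in_cover[n0 s_cov]] := interpolation_image_finitely_covered U_cov.
have n0S_gt0 : 0 < n0%:R + 1 :> R by rewrite ltr_wpDl.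
have [a1 a1_le] := invpRX_eventually_lt (divr_gt0 e_gt0 n0S_gt0).
exists (maxn (\max_(j < Nf) cover_level (c j)) a1) => al al_ge.
have c_le j : (j < Nf)%N -> (cover_level (c j) <= al)%N.
  move=> jNf; apply: leq_trans (leq_trans _ (leq_maxl _ a1)) al_ge.
  exact: (@leq_bigmax _ (fun j : 'I_Nf => cover_level (c j)) (Ordinal jNf)).
apply: (@le_trans _ _ (n0%:R / (p ^ al)%:R + \sum_(j < Nf) cover_radius (c j))%:E).
  by rewrite lee_fin; apply: nres_ratio_le_cover.
rewrite EFinD addeC; apply: leeD.
  rewrite -sumEFin.
  have := @nneseries_lim_ge R (fun j => cover_weight R p (c j)) xpredT 0%N Nf.
  rewrite big_mkord; under eq_bigr do rewrite cover_weightE; apply.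
  by move=> j _ _; rewrite cover_weightE lee_fin cover_radius_ge0.
rewrite lee_fin natrX; have := a1_le al (leq_trans (leq_maxr _ _) al_ge).
rewrite ltr_pdivlMr // => lt_e; apply: le_trans (ltW lt_e).
by rewrite mulrC ler_wpM2l ?lerDl // ltW ?invpRX_gt0.
Qed.

Lemma nres_ratio_cvg :
  (fun a => (((nres p absK s a)%:R / (p ^ a)%:R : R))%:E) @ \oo -->
    haar p absK interpolation_image.
Proof.
set ratio := fun a => (nres p absK s a)%:R / (p ^ a)%:R : R.
have haar_ge0 : (0 <= haar p absK interpolation_image)%E.
  apply/ereal_infP => _ [c _ <-]; apply: nneseries_ge0 => j _ _.
  by rewrite cover_weightE lee_fin cover_radius_ge0.
have haar_fin : haar p absK interpolation_image \is a fin_num.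
  by rewrite ge0_fin_numE // (le_lt_trans (haar_image_le_nres 0)) ?ltry.
set h := fine (haar p absK interpolation_image).
rewrite -(fineK haar_fin); apply: cvg_EFin; first by exists 0%N.
apply/cvgrPdist_le => e e_gt0.
have e2_gt0 : 0 < e / 2 by rewrite divr_gt0.
have [_ [c U_cov <-] c_lt] := lb_ereal_inf_adherent e2_gt0 haar_fin.
have [N ratio_le] := nres_ratio_eventually_le U_cov e2_gt0.
exists N => // al /ratio_le ratio_le_al /=.
have h_le : h <= ratio al by rewrite -lee_fin fineK // haar_image_le_nres.
have ratio_lt : ratio al < h + e.
  rewrite -lte_fin; apply: le_lt_trans ratio_le_al _.
  by rewrite {2}(splitr e) addrA EFinD lteD2rE // EFinD fineK.
move: h_le ratio_lt; rewrite /ratio /h /= => h_le ratio_lt.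
by rewrite ler_norml; apply/andP; split; lra.
Qed.

End TwistedInterpolation.

End PadicIntegers.

Theorem theorem4p3 (R : realType) (p : nat) (K : fieldType) (absK : K -> R)
    (f q : nat) (s : nat -> K) (sir : nat -> nat -> K -> K) :
  prime p -> (1 <= f)%N -> (exists k, q = p ^ k)%N ->
  is_finite_ext_Qp p absK ->
  (forall n, Zp_in p absK (s n)) ->
  (forall i r, (i < p ^ f - 1)%N -> (r < q)%N -> cont_on_Zp p absK (sir i r)) ->
  (exists C D : R, [/\ 0 <= C, 0 <= D, D < 1 &
     forall i r n, (i < p ^ f - 1)%N -> (r < q)%N -> A_set p f q i r n ->
       absK (s n - sir i r n%:R) <= C * D ^+ n]) ->
  (fun a : nat => (((nres p absK s a)%:R / (p ^ a)%:R : R))%:E) @ \oo -->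
    haar p absK
      [set x | Zp_in p absK x /\
         exists i r, [/\ (i < p ^ f - 1)%N, (r < q)%N &
           exists2 y, Zp_in p absK y & x = sir i r (r%:R + q%:R * y)]].
Proof.
move=> p_prime f_gt0 [k ->] absK_Qp s_Zp sir_cont [C [D [C_ge0 D_ge0 D_lt1 s_sir]]].
exact: (@nres_ratio_cvg _ _ _ _ p_prime absK_Qp _ _ _ _ _ _
  f_gt0 s_Zp sir_cont C_ge0 D_ge0 D_lt1 s_sir).
Qed.
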